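(* Let $p\ge2$, $n,\ell,t$ be positive integers, $r\le n$ a nonnegative integer, $\xi$ a prime with $\xi>\max(t,r)$, and $\mathbf{a}=(a_1,\dots,a_t)\in\{0,1,\dots,\xi-1\}^t$. Then the code $\mathcal{C}_{p,t,\ell}(n,r,\mathbf{a},\xi)$ is $t$-zero-block-insertion-correcting with block length $\ell$.
   Context: $\mathbb{Z}_p=\{0,1,\dots,p-1\}$. Any $\mathbf{z}\in\mathbb{Z}_p^n$ of Hamming weight $r$ can be written uniquely as $\mathbf{z}=0^{b_1}u_10^{b_2}u_2\cdots u_r0^{b_{r+1}}$ with $u_i\in\mathbb{Z}_p\setminus\{0\}$ and $b_i\ge0$ (so $b_i$ is the number of zeros having exactly $i-1$ nonzero symbols to their left). Define $$\mathcal{C}_{p,t,\ell}(n,r,\mathbf{a},\xi)=\Bigl\{\mathbf{z}\in\mathbb{Z}_p^n:\ \mathrm{wt}_H(\mathbf{z})=r,\ \sum_{i=1}^{r+1}i^q\Bigl\lfloor\frac{b_i}{\ell}\Bigr\rfloor\equiv a_q\pmod{\xi}\text{ for all }1\le q\le t\Bigr\}.$$ A zero-block insertion of length $\ell$ transforms a word $\mathbf{u}\mathbf{w}$ into $\mathbf{u}0^\ell\mathbf{w}$ (for any split point). A code is $t$-zero-block-insertion-correcting (block length $\ell$) if for any two distinct codewords, the sets of words obtainable from them by at most $t$ successive zero-block insertions of length $\ell$ are disjoint. *)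

From mathcomp Require Import all_boot.
Set Implicit Arguments. Unset Strict Implicit. Unset Printing Implicit Defensive.

Definition is_word (p n : nat) (z : seq nat) : bool :=
  (size z == n) && all (fun x => x < p) z.

Definition wtH (z : seq nat) : nat := count (fun x => x != 0) z.

Definition bblock (z : seq nat) (i : nat) : nat :=
  \sum_(j < size z) ((nth 0 z j == 0) && (wtH (take j z) == i.-1)).

Definition code (p t l n r : nat) (a : seq nat) (xi : nat) (z : seq nat) : Prop :=
  [/\ is_word p n z, wtH z = r &
      forall q, 1 <= q <= t ->
        \sum_(1 <= i < r.+2) i ^ q * (bblock z i %/ l) = nth 0 a q.-1 %[mod xi]].

Definition zb_ins (l : nat) (x y : seq nat) : Prop :=
  exists u w, x = u ++ w /\ y = u ++ nseq l 0 ++ w.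

Fixpoint zb_ins_k (l k : nat) (x y : seq nat) : Prop :=
  match k with
  | 0 => x = y
  | k'.+1 => exists v, zb_ins_k l k' x v /\ zb_ins l v y
  end.

Definition zb_ball (l t : nat) (x y : seq nat) : Prop :=
  exists k, k <= t /\ zb_ins_k l k x y.

Definition zb_insertion_correcting (l t : nat) (C : seq nat -> Prop) : Prop :=
  forall c1 c2, C c1 -> C c2 -> c1 <> c2 ->
    forall y, ~ (zb_ball l t c1 y /\ zb_ball l t c2 y).

(* A zero-block insertion after a prefix u adds l to the zero run b_(wt(u)+1) and changes
   nothing else; in particular the nonzero symbols are untouched.  If y arises from
   codewords c1 and c2 by k1 and k2 insertions, comparing lengths gives k1 = k2 = k, and
   b_i(c1)/l + m1_i = b_i(c2)/l + m2_i (floor division), where m_i counts the insertions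
   into run i.  The defining congruences of the code then say that the two multisets of
   run indices hit by the insertions, both of size k <= t < xi, have the same power sums
   of orders 1..t in F_xi.  Since xi > t, Newton's identities recover a multiset from
   these power sums, and run indices 1..r+1 are distinct modulo xi; so c1 and c2 have
   the same zero runs and the same nonzero symbols, hence are equal. *)

From mathcomp Require Import all_boot all_algebra ring zify.
Set Implicit Arguments. Unset Strict Implicit. Unset Printing Implicit Defensive.
Import GRing.Theory.

Lemma mulr_geometric_sum (R : comNzRingType) (y : R) (T : nat) :
  ((1 - y) * \sum_(1 <= q < T.+1) y ^+ q = y - y ^+ T.+1)%R.
Proof.
elim: T => [|T IH]; first by rewrite big_geq // mulr0 expr1 subrr.
by rewrite big_nat_recr //= mulrDr IH !exprS; ring.
Qed.

Section PowerSums.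
Local Open Scope ring_scope.
Variable F : fieldType.
Implicit Types (s : seq F) (x : F).

Definition psum s (q : nat) : F := \sum_(x <- s) x ^+ q.

Definition recip_prod s : {poly F} := \prod_(x <- s) (1 - x%:P * 'X).

Definition psum_poly (T : nat) s : {poly F} :=
  \sum_(x <- s) \sum_(1 <= q < T.+1) (x%:P * 'X) ^+ q.

Lemma coef_psum_poly T s m :
  (psum_poly T s)`_m = if (0 < m <= T)%N then psum s m else 0.
Proof.
rewrite coef_sum; case: ifP => hm; last first.
  rewrite big1 // => x _; rewrite coef_sum big1_seq // => q /andP[_].
  rewrite mem_index_iota => hq; rewrite exprMn -rmorphXn coefCM coefXn.
  have [em | _] := eqVneq m q; last by rewrite mulr0.
  by rewrite em -(ltnS q T) hq in hm.
apply: eq_bigr => x _; rewrite coef_sum.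
under eq_bigr => q _ do
  rewrite exprMn -rmorphXn coefCM coefXn mulr_natr mulrb eq_sym.
by rewrite -big_mkcond big_nat1_eq ltnS hm.
Qed.

Lemma coef0_recip_prod s : (recip_prod s)`_0 = 1.
Proof.
rewrite -horner_coef0 horner_prod big1_seq // => x _.
by rewrite !hornerE subr0.
Qed.

Lemma size_recip_prod s : (size (recip_prod s) <= (size s).+1)%N.
Proof.
elim: s => [|x s IH]; first by rewrite /recip_prod big_nil size_poly1.
rewrite /recip_prod big_cons (leq_trans (size_polyMleq _ _)) //.
have size_factor : (size (1 - x%:P * 'X)%R <= 2)%N.
  rewrite (leq_trans (size_polyD _ _)) // size_polyN size_poly1 geq_max /=.
  rewrite (leq_trans (size_polyMleq _ _)) // size_polyX size_polyC.
  by case: (x != 0).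
by rewrite -subn1 leq_subLR; exact: leq_add size_factor IH.
Qed.

(* The power series identity X A' = - A * \sum_(q >= 1) psum s q X^q, truncated at
   order T, for A = recip_prod s. *)
Lemma recip_prod_newton_trunc T s : exists R : {poly F},
  'X * (recip_prod s)^`() + recip_prod s * psum_poly T s = 'X^(T.+1) * R.
Proof.
elim: s => [|x s [R IH]].
  by exists 0; rewrite /recip_prod /psum_poly !big_nil -polyC1 derivC !mulr0 add0r.
set y := x%:P * 'X; set A := recip_prod s; set P := psum_poly T s.
exists ((1 - y) * R - (x ^+ T.+1)%:P * A).
have yT : y ^+ T.+1 = 'X^(T.+1) * (x ^+ T.+1)%:P by rewrite exprMn rmorphXn mulrC.
rewrite /recip_prod /psum_poly !big_cons -/A -/P -/y derivM derivB derivC.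
rewrite /y deriv_mulC derivX -/y.
have -> : 'X * ((0 - x%:P * 1) * A + (1 - y) * A^`()) +
    (1 - y) * A * (\sum_(1 <= q < T.+1) y ^+ q + P) =
  (1 - y) * ('X * A^`() + A * P) +
    A * ((1 - y) * \sum_(1 <= q < T.+1) y ^+ q) - y * A by rewrite /y; ring.
by rewrite IH mulr_geometric_sum yT; ring.
Qed.

Lemma newton_identity s m :
  (recip_prod s)`_m *+ m + \sum_(j < m) (recip_prod s)`_j * psum s (m - j) = 0.
Proof.
have [R /(congr1 (coefp m))] := recip_prod_newton_trunc m s.
rewrite /= coefD coefXnM ltnSn coefXM coefM big_ord_recr /= subnn.
rewrite coef_psum_poly mulr0 addr0 => E; rewrite -[RHS]E; congr (_ + _).
  by case: m {E} => [|m] //=; rewrite coef_deriv.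
by apply: eq_bigr => j _; rewrite coef_psum_poly subn_gt0 ltn_ord leq_subr.
Qed.

Lemma recip_prod_eq_of_psum s1 s2 :
  size s1 = size s2 -> (forall m, (0 < m <= size s1)%N -> m%:R != 0 :> F) ->
  (forall q, (0 < q <= size s1)%N -> psum s1 q = psum s2 q) ->
  recip_prod s1 = recip_prod s2.
Proof.
move=> size12 charF psum12; apply/polyP => m; elim/ltn_ind: m => m IH.
have [large|] := ltnP (size s1) m.
  by rewrite !nth_default // (leq_trans (size_recip_prod _)) -?size12.
case: m IH => [|m] IH hm; first by rewrite !coef0_recip_prod.
have charm : m.+1%:R != 0 :> F by apply: charF.
apply: (mulIf charm); rewrite !mulr_natr.
apply: (addIr (\sum_(j < m.+1) (recip_prod s1)`_j * psum s1 (m.+1 - j))).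
rewrite newton_identity -[LHS](newton_identity s2 m.+1); congr (_ + _).
apply: eq_bigr => j _; rewrite IH // psum12 // subn_gt0 ltn_ord.
by rewrite (leq_trans (leq_subr _ _)).
Qed.

Lemma recip_prod_rem x s :
  x \in s -> recip_prod s = (1 - x%:P * 'X) * recip_prod (rem x s).
Proof. by move=> xs; rewrite /recip_prod (perm_big _ (perm_to_rem xs)) big_cons. Qed.

Lemma root_recip_prod s x : x != 0 -> root (recip_prod s) x^-1 = (x \in s).
Proof.
move=> nzx; rewrite /root horner_prod prodf_seq_eq0.
apply/hasP/idP => [[y ys] /= | xs]; last first.
  by exists x; rewrite //= !hornerE mulfV ?subrr.
by rewrite !hornerE subr_eq0 eq_sym => /eqP/divr1_eq <-.
Qed.

Lemma recip_prod_eq_common s1 s2 : (0 < size s1)%N -> size s1 = size s2 ->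
  recip_prod s1 = recip_prod s2 -> exists2 c, c \in s1 & c \in s2.
Proof.
move=> s1_gt0 size12 E.
have [/hasP[c cs1 /= nzc] | /hasPn zero1] := boolP (has (predC1 0) s1).
  by exists c; rewrite // -(root_recip_prod _ nzc) -E root_recip_prod.
have [/hasP[c cs2 /= nzc] | /hasPn zero2] := boolP (has (predC1 0) s2).
  by exists c; rewrite // -(root_recip_prod _ nzc) E root_recip_prod.
case: s1 s2 s1_gt0 size12 zero1 zero2 {E} => [|x s1] [|y s2] //= _ _ zero1 zero2.
have /negPn/eqP -> := zero1 x (mem_head _ _).
have /negPn/eqP -> := zero2 y (mem_head _ _).
by exists 0; rewrite mem_head.
Qed.

Lemma perm_eq_of_recip_prod_eq s1 s2 :
  size s1 = size s2 -> recip_prod s1 = recip_prod s2 -> perm_eq s1 s2.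
Proof.
move Hn: (size s1) => n; elim: n s1 s2 Hn => [|n IH] s1 s2.
  by move/size0nil->; move/esym/size0nil->.
move=> size1 size12 E.
have [c cs1 cs2] : exists2 c, c \in s1 & c \in s2.
  by apply: recip_prod_eq_common E => //; rewrite size1.
have nz_factor : 1 - c%:P * 'X != 0.
  apply/eqP => /(congr1 (coefp 0)); rewrite /= coefB coef1 coefCM coefX coef0.
  by rewrite mulr0 subr0 => /eqP; rewrite oner_eq0.
rewrite (recip_prod_rem cs1) (recip_prod_rem cs2) in E.
have rem12 : perm_eq (rem c s1) (rem c s2).
  by apply: IH (mulfI nz_factor E); rewrite !size_rem -?size12 ?size1.
by rewrite (permPl (perm_to_rem cs1)) (permPr (perm_to_rem cs2)) perm_cons.
Qed.

Lemma perm_eq_of_psum s1 s2 :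
  size s1 = size s2 -> (forall m, (0 < m <= size s1)%N -> m%:R != 0 :> F) ->
  (forall q, (0 < q <= size s1)%N -> psum s1 q = psum s2 q) ->
  perm_eq s1 s2.
Proof.
move=> size12 charF psum12.
by apply: perm_eq_of_recip_prod_eq => //; apply: recip_prod_eq_of_psum.
Qed.

End PowerSums.

(* zrun z k = bblock z k.+1: runs are indexed from 0, so that inserting after a prefix u
   lengthens run wtH u. *)
Definition zrun (z : seq nat) (k : nat) : nat :=
  \sum_(j < size z) ((nth 0 z j == 0) && (wtH (take j z) == k)).

Lemma zrun_nil k : zrun [::] k = 0.
Proof. by rewrite /zrun big_ord0. Qed.

Lemma zrun_cons x z k : zrun (x :: z) k = ((x == 0) && (k == 0)) +
  (if x == 0 then zrun z k else if k is k'.+1 then zrun z k' else 0).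
Proof.
rewrite /zrun /= big_ord_recl /=; congr (_ + _); first by case: k.
case: x => [|x] /=; first by under eq_bigr => i _ do rewrite add0n.
case: k => [|k]; last by under eq_bigr => i _ do rewrite add1n.
by rewrite big1 // => i _; rewrite add1n andbF.
Qed.

Lemma zrun_insert u w l k :
  zrun (u ++ nseq l 0 ++ w) k = zrun (u ++ w) k + l * (k == wtH u).
Proof.
elim: u k => [|x u IH] k /=.
  elim: l => [|l IH] /=; first by rewrite addn0.
  by rewrite zrun_cons IH mulSn addnCA.
rewrite !zrun_cons; case: x => [|x] /=; first by rewrite IH addnA.
by case: k => [|k]; rewrite ?IH ?muln0.
Qed.

Lemma eq_from_zrun z1 z2 :
  [seq x <- z1 | x != 0] = [seq x <- z2 | x != 0] -> zrun z1 =1 zrun z2 -> z1 = z2.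
Proof.
elim: z1 z2 => [|x z1 IH] [|y z2] //=.
- by case: y => [|y] //= _ /(_ 0); rewrite zrun_nil zrun_cons.
- by case: x => [|x] //= _ /(_ 0); rewrite zrun_nil zrun_cons.
case: x => [|x]; case: y => [|y] /= nz12 zrun12.
- congr (_ :: _); apply: IH => // k.
  by have := zrun12 k; rewrite !zrun_cons /= => /addnI.
- by have := zrun12 0; rewrite !zrun_cons.
- by have := zrun12 0; rewrite !zrun_cons.
case: nz12 => -> nz12; congr (_ :: _); apply: IH => // k.
by have := zrun12 k.+1; rewrite !zrun_cons.
Qed.

Lemma zb_ins_k_spec l k x y : zb_ins_k l k x y ->
  [/\ size y = size x + k * l,
      [seq v <- y | v != 0] = [seq v <- x | v != 0] &
      exists2 s : seq nat, size s = k /\ all (leq^~ (wtH x)) s &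
        forall j, zrun y j = zrun x j + l * count_mem j s].
Proof.
elim: k y => [|k IH] y /=.
  by move=> ->; split; rewrite ?addn0 //; exists [::] => // j; rewrite muln0 addn0.
case=> v [/IH [size_v nz_v [s [size_s pos_s] zrun_v]]] [u [w [Ev ->]]]; subst v.
have wt_uw : wtH (u ++ w) = wtH x by rewrite /wtH -!size_filter nz_v.
split.
- by move: size_v; rewrite !size_cat size_nseq mulSn; lia.
- by rewrite !filter_cat filter_nseq /= -filter_cat nz_v.
exists (wtH u :: s); first by rewrite /= size_s pos_s -wt_uw /wtH count_cat leq_addr.
by move=> j; rewrite zrun_insert zrun_v eq_sym mulnDr -addnA [X in _ + X = _]addnC.
Qed.

Lemma sum_mul_count_mem (F : nat -> nat) m n s : all (fun x => m <= x < n) s ->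
  \sum_(m <= i < n) F i * count_mem i s = \sum_(x <- s) F x.
Proof.
elim: s => [|x s IH] /=; first by rewrite big_nil big1 // => i _; rewrite muln0.
case/andP=> hx /IH IHs; rewrite big_cons -IHs.
under eq_bigr do rewrite /= mulnDr.
rewrite big_split /=; congr (_ + _).
rewrite (eq_bigr (fun i => if i == x then F i else 0)) => [|i _]; last first.
  by rewrite eq_sym; case: eqP; rewrite ?muln1 ?muln0.
by rewrite -big_mkcond big_nat1_eq hx.
Qed.

Lemma perm_map_inj_in (T U : eqType) (f : T -> U) (P : pred T) s1 s2 :
  {in P &, injective f} -> all P s1 -> all P s2 ->
  perm_eq (map f s1) (map f s2) -> perm_eq s1 s2.
Proof.
move=> inj_f P1 P2 /permP f12; apply/allP => x; rewrite mem_cat => x12 /=.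
have Px : P x by case/orP: x12 => [/(allP P1) | /(allP P2)].
have count_f s : all P s -> count_mem x s = count_mem (f x) (map f s).
  move=> Ps; rewrite count_map; apply: eq_in_count => y /(allP Ps) Py /=.
  by apply/eqP/eqP => [-> | /inj_f ->].
by rewrite !count_f ?f12.
Qed.

Lemma perm_eq_of_power_sums_mod xi s1 s2 : prime xi ->
  size s1 = size s2 -> size s1 < xi -> all (ltn^~ xi) s1 -> all (ltn^~ xi) s2 ->
  (forall q, 0 < q <= size s1 ->
     \sum_(x <- s1) x.+1 ^ q = \sum_(x <- s2) x.+1 ^ q %[mod xi]) ->
  perm_eq s1 s2.
Proof.
move=> xi_pr size12 small_size lt1 lt2 psum12.
pose f x : 'F_xi := (x.+1)%:R%R.
have psum_f s q : psum (map f s) q = (\sum_(x <- s) x.+1 ^ q)%:R%R.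
  by rewrite /psum big_map natr_sum; apply: eq_bigr => x _; rewrite natrX.
apply: (perm_map_inj_in (f := f) (P := ltn^~ xi)) => // [x y xlt ylt|].
  rewrite /f => /(congr1 (@nat_of_ord _)); rewrite !val_Fp_nat //.
  rewrite -(addn1 x) -(addn1 y) => /eqP.
  by rewrite eqn_modDr !modn_small // => /eqP.
apply: perm_eq_of_psum; rewrite ?size_map //.
  move=> m /andP[m_gt0 m_le]; rewrite -(dvdn_pcharf (pchar_Fp xi_pr)).
  by rewrite gtnNdvd // (leq_ltn_trans m_le).
by move=> q hq; rewrite !psum_f -(Fp_nat_mod xi_pr) psum12 // Fp_nat_mod.
Qed.

Lemma code_power_sums_mod p t l n r a xi c1 c2 s1 s2 : 0 < l ->
  code p t l n r a xi c1 -> code p t l n r a xi c2 ->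
  all (leq^~ r) s1 -> all (leq^~ r) s2 ->
  (forall j, zrun c1 j + l * count_mem j s1 = zrun c2 j + l * count_mem j s2) ->
  forall q, 0 < q <= t ->
    \sum_(x <- s1) x.+1 ^ q = \sum_(x <- s2) x.+1 ^ q %[mod xi].
Proof.
move=> l_gt0 [_ _ code1] [_ _ code2] r_s1 r_s2 zrun12 q hq.
have quot12 j : zrun c1 j %/ l + count_mem j s1 = zrun c2 j %/ l + count_mem j s2.
  by have := congr1 (divn^~ l) (zrun12 j); rewrite /= !(mulnC l) !divnDMl.
have moment c s : all (leq^~ r) s ->
    \sum_(1 <= i < r.+2) i ^ q * (bblock c i %/ l) + \sum_(x <- s) x.+1 ^ q =
    \sum_(0 <= i < r.+1) i.+1 ^ q * (zrun c i %/ l + count_mem i s).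
  move=> r_s; rewrite big_add1.
  rewrite -(@sum_mul_count_mem (fun i => i.+1 ^ q) 0 r.+1 s r_s) -big_split.
  by apply: eq_bigr => i _; rewrite mulnDr.
have := moment c1 s1 r_s1; rewrite (eq_bigr _ (fun i _ => congr1 _ (quot12 i))).
rewrite -moment // => /(congr1 (modn^~ xi)) /=.
by rewrite -modnDml code1 // -code2 // modnDml => /eqP; rewrite eqn_modDl => /eqP.
Qed.

Theorem lemma4 (p n l t r xi : nat) (a : seq nat) :
  2 <= p -> 0 < n -> 0 < l -> 0 < t -> r <= n ->
  prime xi -> maxn t r < xi ->
  size a = t -> all (fun x => x < xi) a ->
  zb_insertion_correcting l t (code p t l n r a xi).
Proof.
move=> _ _ l_gt0 _ _ xi_pr; rewrite gtn_max => /andP[t_lt_xi r_lt_xi] _ _.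
move=> c1 c2 code1 code2 c12 y [[k1 [k1_le I1]] [k2 [k2_le I2]]]; apply: c12.
have [[/andP[/eqP size1 _] wt1 _] [/andP[/eqP size2 _] wt2 _]] := (code1, code2).
have [size_y1 nz1 [s1 [size_s1 r_s1] zrun1]] := zb_ins_k_spec I1.
have [size_y2 nz2 [s2 [size_s2 r_s2] zrun2]] := zb_ins_k_spec I2.
rewrite wt1 in r_s1; rewrite wt2 in r_s2.
have size12 : size s1 = size s2.
  rewrite size_s1 size_s2; apply/eqP; rewrite -(eqn_pmul2r l_gt0) -(eqn_add2l n).
  by rewrite -{1}size1 -size_y1 size_y2 size2.
have zrun12 j : zrun c1 j + l * count_mem j s1 = zrun c2 j + l * count_mem j s2.
  by rewrite -zrun1 -zrun2.
have lt_xi s : all (leq^~ r) s -> all (ltn^~ xi) s.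
  by apply: sub_all => x /leq_ltn_trans; apply.
have perm12 : perm_eq s1 s2.
  apply: (perm_eq_of_power_sums_mod xi_pr size12); rewrite ?lt_xi //.
    by rewrite size_s1 (leq_ltn_trans k1_le).
  move=> q /andP[q_gt0 q_le]; apply: (code_power_sums_mod l_gt0 code1 code2) => //.
  by rewrite q_gt0 (leq_trans q_le) ?size_s1.
apply: eq_from_zrun => [|j]; first by rewrite -nz1 nz2.
by have := zrun12 j; rewrite (permP perm12 (pred1 j)) => /addIn.
Qed.
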